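(* Let $E: y^2=x^3+Ax+B$ be an elliptic curve over $\mathbb{Q}(2^\infty)$ with $j(E)\in\mathbb{Q}\setminus\{0,1728\}$, and let $E'$ be as in the context. If $E(\mathbb{Q}(2^\infty))[2]\neq\{\mathcal{O}\}$, then $E(\mathbb{Q}(2^\infty))[2]=E[2]$ and $E'(\mathbb{Q})[2]\neq\{\mathcal{O}\}$.
   Context: $\mathbb{Q}(2^\infty)=\mathbb{Q}(\{\sqrt{m}: m\in\mathbb{Z}\})$ is the compositum of all quadratic extensions of $\mathbb{Q}$ in $\mathbb{C}$. With $j=j(E)$, $E'$ is the elliptic curve over $\mathbb{Q}$ given by $y^2=x^3-\frac{27j}{j-1728}x+\frac{54j}{j-1728}$ (a quadratic twist of $E$ with the same $j$-invariant). *)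

(* everything lives in algC, the algebraic closure of Q
   (algebraic complex numbers), which contains Q(2^oo). *)
From mathcomp Require Import all_boot all_order all_algebra all_field.
Set Implicit Arguments. Unset Strict Implicit. Unset Printing Implicit Defensive.
Import Order.TTheory GRing.Theory Num.Theory.
Local Open Scope ring_scope.

(* Q(2^oo) = Q({sqrt m : m in Z}): the smallest subfield of algC containing
   a square root of every integer m. *)
Inductive Q2inf : algC -> Prop :=
  | Q2inf_sqrt (m : int) : Q2inf (sqrtC (m%:~R))
  | Q2inf_1 : Q2inf 1
  | Q2inf_add x y : Q2inf x -> Q2inf y -> Q2inf (x + y)
  | Q2inf_opp x : Q2inf x -> Q2inf (- x)
  | Q2inf_mul x y : Q2inf x -> Q2inf y -> Q2inf (x * y)
  | Q2inf_inv x : Q2inf x -> Q2inf (x^-1).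

Definition isQ (x : algC) : Prop := x \in Crat.

(* Projective points of a short Weierstrass curve: None is the point at
   infinity O, Some (x, y) an affine point. *)
Definition point := option (algC * algC).

Definition on_curve (A B : algC) (P : point) : Prop :=
  match P with
  | None => True
  | Some (x, y) => y ^+ 2 = x ^+ 3 + A * x + B
  end.

Definition negp (P : point) : point :=
  match P with None => None | Some (x, y) => Some (x, - y) end.

(* P is in E[2] (over algC = algebraic closure): P on E and 2P = O,
   i.e. P + P = O, i.e. P = -P. *)
Definition tors2 (A B : algC) (P : point) : Prop :=
  on_curve A B P /\ negp P = P.

Definition rational_over (K : algC -> Prop) (P : point) : Prop :=
  match P with None => True | Some (x, y) => K x /\ K y end.

Definition disc_nz (A B : algC) : Prop := 4 * A ^+ 3 + 27 * B ^+ 2 != 0.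

Definition jinv (A B : algC) : algC :=
  1728 * (4 * A ^+ 3) / (4 * A ^+ 3 + 27 * B ^+ 2).

Definition twistA (j : algC) : algC := - (27 * j / (j - 1728)).
Definition twistB (j : algC) : algC := 54 * j / (j - 1728).

From mathcomp Require Import all_boot all_order all_algebra all_field.
From mathcomp Require Import ring.
From Stdlib Require Import Classical.

Set Implicit Arguments.
Unset Strict Implicit.
Unset Printing Implicit Defensive.
Import Order.TTheory GRing.Theory Num.Theory.
Local Open Scope ring_scope.

(* The substitution x |-> (-2A/B) x maps the 2-division polynomial
   x^3 + A x + B of E onto that of E', whose coefficients are rational.
   A rational cubic with a root in a tower of quadratic extensions of Q has a
   rational root (a root a + b sqrt c drags along its conjugate a - b sqrt c,
   and then the third root is rational in a and the coefficients); Q(2^oo) is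
   a union of such towers.  So E' has a rational 2-torsion point (r, 0), and
   the two other roots of the cubic of E' lie in Q(sqrt D) with
   D = -3 r^2 - 4 A' rational, hence in Q(2^oo); scaling back gives E[2]. *)

Record is_subfield (K : algC -> Prop) : Prop := IsSubfield {
  subfield_rat : forall x, x \in Crat -> K x;
  subfield_add : forall x y, K x -> K y -> K (x + y);
  subfield_opp : forall x, K x -> K (- x);
  subfield_mul : forall x y, K x -> K y -> K (x * y);
  subfield_inv : forall x, K x -> K (x^-1) }.
Arguments subfield_rat {K}. Arguments subfield_add {K}.
Arguments subfield_opp {K}. Arguments subfield_mul {K}.
Arguments subfield_inv {K}.

Ltac subfield_closed F := repeat first
  [ assumption
  | apply: (subfield_add F) | apply: (subfield_mul F)
  | apply: (subfield_opp F) | apply: (subfield_inv F)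
  | (apply: (subfield_rat F); by rewrite ?rpred_nat ?rpred_int ?rpred0 ?rpred1) ].

Lemma isQ_subfield : is_subfield isQ.
Proof. by split=> // *; rewrite /isQ ?rpredD ?rpredN ?rpredM ?rpredV. Qed.

Definition adjoin_sqrt (K : algC -> Prop) (c x : algC) : Prop :=
  exists a b, K a /\ K b /\ x = a + b * c.

Lemma adjoin_sqrt_mono (K K' : algC -> Prop) c x :
  (forall y, K y -> K' y) -> adjoin_sqrt K c x -> adjoin_sqrt K' c x.
Proof. by move=> KK' [a [b [Ka [Kb ->]]]]; exists a, b; auto. Qed.

Section AdjoinSqrt.

Variables (K : algC -> Prop) (c : algC).
Hypothesis Ksub : is_subfield K.

Lemma adjoin_sqrtW x : K x -> adjoin_sqrt K c x.
Proof.
by move=> Kx; exists x, 0; do 2?split=> //; [subfield_closed Ksub | ring].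
Qed.

Lemma adjoin_sqrt_id x : K c -> adjoin_sqrt K c x -> K x.
Proof. by move=> Kc [a [b [Ka [Kb ->]]]]; subfield_closed Ksub. Qed.

Lemma adjoin_sqrt_norm_eq0 a b : ~ K c -> K a -> K b ->
  a ^+ 2 - b ^+ 2 * c ^+ 2 = 0 -> a = 0 /\ b = 0.
Proof.
move=> Knc Ka Kb /eqP; rewrite subr_eq0 -exprMn => /eqP normE.
have b0 : b = 0.
  have [//|bn0] := eqVneq b 0; exfalso; apply: Knc.
  have : (a / b) ^+ 2 == c ^+ 2.
    apply/eqP; apply: (mulIf (expf_neq0 2 bn0)).
    by rewrite -exprMn divfK // normE exprMn mulrC.
  by rewrite eqf_sqr => /orP[] /eqP abE; [rewrite -abE | rewrite -[c]opprK -abE];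
    subfield_closed Ksub.
by split=> //; apply/eqP; rewrite -sqrf_eq0 normE b0 mul0r expr0n.
Qed.

Hypothesis Kc2 : K (c ^+ 2).

Lemma adjoin_sqrt_inv x : adjoin_sqrt K c x -> adjoin_sqrt K c x^-1.
Proof.
case: (classic (K c)) => [Kc /(adjoin_sqrt_id Kc) Kx | Knc [a [b [Ka [Kb ->]]]]].
  by apply: adjoin_sqrtW; subfield_closed Ksub.
set N := a ^+ 2 - b ^+ 2 * c ^+ 2.
have [N0 | Nn0] := eqVneq N 0.
  have [-> ->] := adjoin_sqrt_norm_eq0 Knc Ka Kb N0.
  by rewrite mul0r addr0 invr0; apply: adjoin_sqrtW; subfield_closed Ksub.
exists (a / N), (- b / N); do 2?split; try by subfield_closed Ksub.
have normE : (a + b * c) * (a - b * c) = N by rewrite /N; ring.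
have /andP[xn0 x'n0] : (a + b * c != 0) && (a - b * c != 0).
  by rewrite -negb_or -mulf_eq0 normE.
by rewrite -normE; field; rewrite xn0 x'n0.
Qed.

Lemma adjoin_sqrt_subfield : is_subfield (adjoin_sqrt K c).
Proof.
split; last exact: adjoin_sqrt_inv.
- by move=> x /(subfield_rat Ksub); apply: adjoin_sqrtW.
- move=> x y [a [b [Ka [Kb ->]]]] [a' [b' [Ka' [Kb' ->]]]].
  by exists (a + a'), (b + b'); do 2?split; last ring; subfield_closed Ksub.
- move=> x [a [b [Ka [Kb ->]]]].
  by exists (- a), (- b); do 2?split; last ring; subfield_closed Ksub.
- move=> x y [a [b [Ka [Kb ->]]]] [a' [b' [Ka' [Kb' ->]]]].
  exists (a * a' + b * b' * c ^+ 2), (a * b' + a' * b).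
  by do 2?split; last ring; subfield_closed Ksub.
Qed.

End AdjoinSqrt.

Definition cubic (c2 c1 c0 x : algC) : algC := x ^+ 3 + c2 * x ^+ 2 + c1 * x + c0.

Lemma cubic_third_root c2 c1 c0 x1 x2 : x1 != x2 ->
  cubic c2 c1 c0 x1 = 0 -> cubic c2 c1 c0 x2 = 0 -> cubic c2 c1 c0 (- c2 - x1 - x2) = 0.
Proof.
move=> x12 f1 f2; set Q := x1 ^+ 2 + x1 * x2 + x2 ^+ 2 + c2 * (x1 + x2) + c1.
have : (x2 - x1) * Q = cubic c2 c1 c0 x2 - cubic c2 c1 c0 x1 by rewrite /cubic /Q; ring.
rewrite f1 f2 subrr => /eqP; rewrite mulf_eq0 subr_eq0 eq_sym (negPf x12) => /eqP Q0.
have -> : cubic c2 c1 c0 (- c2 - x1 - x2) = cubic c2 c1 c0 x1 + (- c2 - x1 - x2 - x1) * Q.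
  by rewrite /cubic /Q; ring.
by rewrite f1 Q0 mulr0 addr0.
Qed.

Section CubicDescent.

Variables (K : algC -> Prop) (c c2 c1 c0 : algC).
Hypotheses (Ksub : is_subfield K) (Kc2 : K (c ^+ 2)).
Hypotheses (K2 : K c2) (K1 : K c1) (K0 : K c0).

Lemma cubic_conj_root a b : ~ K c -> K a -> K b ->
  cubic c2 c1 c0 (a + b * c) = 0 -> cubic c2 c1 c0 (a - b * c) = 0.
Proof.
move=> Knc Ka Kb.
set P0 := a ^+ 3 + 3 * a * b ^+ 2 * c ^+ 2 + c2 * (a ^+ 2 + b ^+ 2 * c ^+ 2) + c1 * a + c0.
set P1 := 3 * a ^+ 2 * b + b ^+ 3 * c ^+ 2 + 2 * c2 * a * b + c1 * b.
have -> : cubic c2 c1 c0 (a + b * c) = P0 + P1 * c by rewrite /cubic /P0 /P1; ring.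
have -> : cubic c2 c1 c0 (a - b * c) = P0 - P1 * c by rewrite /cubic /P0 /P1; ring.
have [P10 | P1n0] := eqVneq P1 0; first by rewrite P10 !mul0r addr0 subr0.
move=> /eqP; rewrite addr_eq0 => /eqP P0E; exfalso; apply: Knc.
have -> : c = - P0 / P1 by rewrite P0E opprK mulrC mulKf.
by rewrite /P0 /P1; subfield_closed Ksub.
Qed.

Lemma cubic_root_adjoin_sqrt x : adjoin_sqrt K c x -> cubic c2 c1 c0 x = 0 ->
  exists2 y, K y & cubic c2 c1 c0 y = 0.
Proof.
move=> Kcx fx; case: (classic (K c)) => [Kc | Knc].
  by exists x => //; apply: adjoin_sqrt_id Kc Kcx.
case: Kcx fx => a [b [Ka [Kb ->]]] fx.
have [b0 | bn0] := eqVneq b 0; first by exists a; rewrite // -fx b0 mul0r addr0.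
have cn0 : c != 0 by apply: contra_not_neq Knc => ->; subfield_closed Ksub.
have fx' := cubic_conj_root Knc Ka Kb fx.
exists (- c2 - a *+ 2); first by rewrite mulr2n; subfield_closed Ksub.
have -> : - c2 - a *+ 2 = - c2 - (a + b * c) - (a - b * c) by ring.
apply: cubic_third_root fx fx'.
rewrite -subr_eq0 (_ : _ - _ = 2 * b * c); last by ring.
by rewrite !mulf_neq0 // pnatr_eq0.
Qed.

End CubicDescent.

Fixpoint sqrt_tower (K : algC -> Prop) (ms : seq int) : algC -> Prop :=
  if ms is m :: ms' then adjoin_sqrt (sqrt_tower K ms') (sqrtC m%:~R) else K.

Lemma sqrt_tower_subfield K ms : is_subfield K -> is_subfield (sqrt_tower K ms).
Proof.
move=> Ksub; elim: ms => //= m ms IH; apply: adjoin_sqrt_subfield => //.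
by rewrite sqrtCK; apply: (subfield_rat IH); rewrite rpred_int.
Qed.

Lemma sqrt_tower_cat K ns ms : sqrt_tower K (ns ++ ms) = sqrt_tower (sqrt_tower K ms) ns.
Proof. by elim: ns => //= n ns ->. Qed.

Lemma sqrt_tower_mono (K K' : algC -> Prop) ns x :
  (forall y, K y -> K' y) -> sqrt_tower K ns x -> sqrt_tower K' ns x.
Proof.
elim: ns x => [|n ns IH] x KK' /=; first exact: KK'.
by apply: adjoin_sqrt_mono => y; apply: IH.
Qed.

Lemma sqrt_towerW K ns x : is_subfield K -> K x -> sqrt_tower K ns x.
Proof.
move=> Ksub; elim: ns x => //= n ns IH x Kx.
by apply: adjoin_sqrtW; [apply: sqrt_tower_subfield | apply: IH].
Qed.

Lemma cubic_root_sqrt_tower K ms c2 c1 c0 x :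
  is_subfield K -> K c2 -> K c1 -> K c0 ->
  sqrt_tower K ms x -> cubic c2 c1 c0 x = 0 -> exists2 y, K y & cubic c2 c1 c0 y = 0.
Proof.
move=> Ksub K2 K1 K0; elim: ms x => [|m ms IH] x /= Kx fx; first by exists x.
have Fsub := sqrt_tower_subfield ms Ksub.
have Fc2 : sqrt_tower K ms (sqrtC m%:~R ^+ 2).
  by rewrite sqrtCK; apply: (subfield_rat Fsub); rewrite rpred_int.
have [y Ky fy] := cubic_root_adjoin_sqrt Fsub Fc2
  (sqrt_towerW ms Ksub K2) (sqrt_towerW ms Ksub K1) (sqrt_towerW ms Ksub K0) Kx fx.
exact: IH Ky fy.
Qed.

Lemma Q2inf_int (z : int) : Q2inf z%:~R.
Proof.
have Q2inf_nat n : Q2inf n%:R.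
  elim: n => [|n IH]; last by rewrite mulrS; apply: Q2inf_add => //; apply: Q2inf_1.
  by rewrite mulr0n -(addrN 1); apply: Q2inf_add; [|apply: Q2inf_opp]; apply: Q2inf_1.
case: z => n; first exact: Q2inf_nat.
by rewrite NegzE mulrNz; apply/Q2inf_opp/Q2inf_nat.
Qed.

Lemma Q2inf_subfield : is_subfield Q2inf.
Proof.
split; try by constructor.
move=> x /CratP [q ->]; rewrite -[q]divq_num_den fmorph_div !rmorph_int.
by apply: Q2inf_mul; [|apply: Q2inf_inv]; apply: Q2inf_int.
Qed.

Lemma Q2inf_sqrt_tower x : Q2inf x -> exists ms, sqrt_tower isQ ms x.
Proof.
have Qsub := isQ_subfield.
have tower_sub ms := sqrt_tower_subfield ms Qsub.
have merge ms ns y z : sqrt_tower isQ ms y -> sqrt_tower isQ ns z ->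
    sqrt_tower isQ (ns ++ ms) y /\ sqrt_tower isQ (ns ++ ms) z.
  rewrite sqrt_tower_cat => Ty Tz; split; first exact: sqrt_towerW.
  by apply: sqrt_tower_mono Tz => w; apply: sqrt_towerW.
elim=> [m | | y z _ [ms Ty] _ [ns Tz] | y _ [ms Ty] | y z _ [ms Ty] _ [ns Tz] | y _ [ms Ty]].
- by exists [:: m], 0, 1; rewrite /= mul1r add0r /isQ rpred0 rpred1.
- by exists [::]; apply: rpred1.
- have [Ty' Tz'] := merge _ _ _ _ Ty Tz.
  by exists (ns ++ ms); apply: (subfield_add (tower_sub _)).
- by exists ms; apply: (subfield_opp (tower_sub _)).
- have [Ty' Tz'] := merge _ _ _ _ Ty Tz.
  by exists (ns ++ ms); apply: (subfield_mul (tower_sub _)).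
- by exists ms; apply: (subfield_inv (tower_sub _)).
Qed.

Lemma cubic_root_Q2inf c2 c1 c0 x : isQ c2 -> isQ c1 -> isQ c0 ->
  Q2inf x -> cubic c2 c1 c0 x = 0 -> exists2 r, isQ r & cubic c2 c1 c0 r = 0.
Proof.
move=> Q2 Q1 Q0 /Q2inf_sqrt_tower [ms Tx].
exact: cubic_root_sqrt_tower isQ_subfield Q2 Q1 Q0 Tx.
Qed.

Lemma Q2inf_sqrt_rat d s : isQ d -> s ^+ 2 = d -> Q2inf s.
Proof.
move=> /CratP [q ->] sE; set n := numq q; set e := denq q.
have e0 : e%:~R != 0 :> algC by rewrite intr_eq0 denq_neq0.
have : (e%:~R * s) ^+ 2 == sqrtC (n * e)%:~R ^+ 2.
  by rewrite sqrtCK exprMn sE -[q]divq_num_den fmorph_div !rmorph_int intrM -/n -/e;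
    apply/eqP; field.
have Qsub := Q2inf_subfield.
have Qw : Q2inf (sqrtC (n * e)%:~R) := Q2inf_sqrt _.
by rewrite eqf_sqr => /orP[] /eqP esE; rewrite -[s](mulKf e0) esE; subfield_closed Qsub.
Qed.

Lemma depressed_cubic_other_root p q r t : cubic 0 p q r = 0 -> cubic 0 p q t = 0 ->
  t = r \/ (2 * t + r) ^+ 2 = - 3 * r ^+ 2 - 4 * p.
Proof.
move=> fr ft; set Q := t ^+ 2 + r * t + r ^+ 2 + p.
have : (t - r) * Q = cubic 0 p q t - cubic 0 p q r by rewrite /cubic /Q; ring.
rewrite ft fr subrr => /eqP; rewrite mulf_eq0 subr_eq0.
case/orP=> [/eqP -> | /eqP Q0]; [by left | right].
have -> : (2 * t + r) ^+ 2 = 4 * Q + (- 3 * r ^+ 2 - 4 * p) by rewrite /Q; ring.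
by rewrite Q0 mulr0 add0r.
Qed.

Lemma Q2inf_root_of_rational_root p q r t : isQ p -> isQ r ->
  cubic 0 p q r = 0 -> cubic 0 p q t = 0 -> Q2inf t.
Proof.
move=> Qp Qr fr ft; have Qsub := Q2inf_subfield.
have Q2r : Q2inf r := subfield_rat Qsub _ Qr.
have [-> // | sE] := depressed_cubic_other_root fr ft.
have Qd : isQ (- 3 * r ^+ 2 - 4 * p).
  by rewrite /isQ rpredB ?rpredM ?rpredN ?rpredX ?rpred_nat.
have Q2s := Q2inf_sqrt_rat Qd sE.
have -> : t = (2 * t + r - r) / 2 by field.
by subfield_closed Qsub.
Qed.

Lemma tors2_SomeE A B x y : tors2 A B (Some (x, y)) <-> y = 0 /\ cubic 0 A B x = 0.
Proof.
rewrite /tors2 /=; split=> [[onE [yE]] | [-> fx]].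
  have : y *+ 2 == 0 by rewrite mulr2n -{1}yE addNr.
  rewrite mulrn_eq0 => /eqP y0.
  by split=> //; rewrite /cubic mul0r addr0 -onE y0 expr0n.
by split; [rewrite expr0n -[LHS]fx /cubic mul0r addr0 | rewrite oppr0].
Qed.

Lemma jinv_A0 B : jinv 0 B = 0.
Proof. by rewrite /jinv expr0n /= !mulr0 mul0r. Qed.

Lemma jinv_sub1728 A B : disc_nz A B ->
  jinv A B - 1728 = - (1728 * 27 * B ^+ 2) / (4 * A ^+ 3 + 27 * B ^+ 2).
Proof. by rewrite /disc_nz /jinv => D0; field. Qed.

Lemma jinv_B0 A : disc_nz A 0 -> jinv A 0 = 1728.
Proof.
by move=> D0; apply/eqP; rewrite -subr_eq0 jinv_sub1728 // expr0n /= !mulr0 oppr0 mul0r.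
Qed.

Lemma twistA_jinv A B : disc_nz A B -> B != 0 ->
  twistA (jinv A B) = 4 * A ^+ 3 / B ^+ 2.
Proof.
move=> D0 B0; rewrite /twistA jinv_sub1728 // /jinv; move: D0; rewrite /disc_nz => D0.
by field; rewrite D0 B0.
Qed.

Lemma twistB_jinv A B : disc_nz A B -> B != 0 ->
  twistB (jinv A B) = - (8 * A ^+ 3 / B ^+ 2).
Proof.
move=> D0 B0; rewrite /twistB jinv_sub1728 // /jinv; move: D0; rewrite /disc_nz => D0.
by field; rewrite D0 B0.
Qed.

Lemma twistA_rat j : isQ j -> isQ (twistA j).
Proof. by move=> Qj; rewrite /isQ rpredN rpred_div ?rpredM ?rpredB ?rpred_nat. Qed.

Lemma twistB_rat j : isQ j -> isQ (twistB j).
Proof. by move=> Qj; rewrite /isQ rpred_div ?rpredM ?rpredB ?rpred_nat. Qed.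

Lemma cubic_twist_scale A B x : B != 0 ->
  cubic 0 (4 * A ^+ 3 / B ^+ 2) (- (8 * A ^+ 3 / B ^+ 2)) (- (2 * A) / B * x)
  = (- (2 * A) / B) ^+ 3 * cubic 0 A B x.
Proof. by move=> B0; rewrite /cubic; field. Qed.

Theorem lemma5p6 (A B : algC)
  (hA : Q2inf A) (hB : Q2inf B) (hdisc : disc_nz A B)
  (hjQ : isQ (jinv A B)) (hj0 : jinv A B != 0) (hj1728 : jinv A B != 1728)
  (h2 : exists P : point, P <> None /\ tors2 A B P /\ rational_over Q2inf P) :
  (forall P : point, tors2 A B P -> rational_over Q2inf P) /\
  (exists P : point, P <> None /\
     tors2 (twistA (jinv A B)) (twistB (jinv A B)) P /\ rational_over isQ P).
Proof.
have Qsub := Q2inf_subfield.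
have A0 : A != 0 by apply: contraNneq hj0 => ->; rewrite jinv_A0.
have B0 : B != 0 by apply: contraNneq hj1728 => B0; rewrite B0 in hdisc *; rewrite jinv_B0.
set lam := - (2 * A) / B.
have lam0 : lam != 0 by rewrite mulf_neq0 ?invr_eq0 // oppr_eq0 mulf_neq0 // pnatr_eq0.
have Qlam : Q2inf lam by rewrite /lam; subfield_closed Qsub.
have twist_root x : cubic 0 A B x = 0 ->
    cubic 0 (twistA (jinv A B)) (twistB (jinv A B)) (lam * x) = 0.
  by move=> fx; rewrite twistA_jinv // twistB_jinv // cubic_twist_scale // fx mulr0.
have [QA' QB'] := (twistA_rat hjQ, twistB_rat hjQ).
case: h2 => [[[e y] [_ [/tors2_SomeE [_ fe] [Qe _]]] | [] //]].
have [r Qr fr] := cubic_root_Q2inf (rpred0 _) QA' QB'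
  (subfield_mul Qsub _ _ Qlam Qe) (twist_root e fe).
split=> [[[x y']|] // /tors2_SomeE [-> fx] |].
  split; last exact: (subfield_rat Qsub _ (rpred0 _)).
  rewrite -[x](mulKf lam0); apply: (subfield_mul Qsub); first exact: subfield_inv.
  exact: Q2inf_root_of_rational_root QA' Qr fr (twist_root x fx).
exists (Some (r, 0)); split=> //; split; first exact/tors2_SomeE.
by split; rewrite // /isQ rpred0.
Qed.
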